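(* Let $C_0[-1,1]$ be the Banach space (sup norm) of continuous complex functions on $[-1,1]$ vanishing at $\pm1$. Let $\theta_1\colon[0,1]\to[-1,0]$ be a decreasing bijection and $\theta_2\colon[0,1]\to[0,1]$ an increasing bijection. For $t\in[0,1]$ let $\mathscr{N}_t=\{f\in C_0[-1,1]:\mathrm{supp}(f)\subseteq[\theta_1(t),\theta_2(t)]\}$ and $\mathfrak{N}=\{\mathscr{N}_t:t\in[0,1]\}$ (a maximal nest). Let $\varGamma([-1,1])$ be the group (under composition) of increasing bijections of $[-1,1]$, and for $\varphi\in\varGamma([-1,1])$ let $V_\varphi f=f\circ\varphi$ ($f\in C_0[-1,1]$). Then: (i) $\varGamma_{\theta_1,\theta_2}([-1,1]):=\{\varphi\in\varGamma([-1,1]):\theta_1^{-1}\circ\varphi\circ\theta_1=\theta_2^{-1}\circ\varphi\circ\theta_2\}$ is a subgroup of $\varGamma([-1,1])$; (ii) for $\varphi\in\varGamma([-1,1])$, $V_\varphi$ is a collineation of $\mathfrak{N}$ if and only if $\varphi\in\varGamma_{\theta_1,\theta_2}([-1,1])$, and hence $\mathcal{O}(\mathfrak{N})=\{V_\varphi:\varphi\in\varGamma_{\theta_1,\theta_2}([-1,1])\}$ is a subgroup of $\mathrm{Col}(\mathfrak{N})$; (iii) $\mathrm{Col}(\mathfrak{N})=\mathrm{Grp}(\mathrm{Alg}(\mathfrak{N}))\rtimes\mathcal{O}(\mathfrak{N})$.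
   Context: $\mathrm{supp}(f)=\overline{\{x:f(x)\neq0\}}$. In (i), the condition $\theta_1^{-1}\circ\varphi\circ\theta_1=\theta_2^{-1}\circ\varphi\circ\theta_2$ is understood as an equality of maps on $[0,1]$ (in particular both sides must be defined). $\mathrm{Alg}(\mathfrak{F})$ is the set of bounded operators leaving every subspace of $\mathfrak{F}$ invariant; $\mathrm{Grp}(\mathcal{A})$ is the group of invertible $S\in\mathcal{A}$ with $S^{-1}\in\mathcal{A}$. $\mathrm{Col}(\mathfrak{F})$ is the group of invertible bounded $S$ such that for every closed subspace $\mathscr{M}$: $\mathscr{M}\in\mathfrak{F}$ iff $S\mathscr{M}\in\mathfrak{F}$. For a subgroup $\mathcal{O}\subseteq\mathrm{Col}(\mathfrak{F})$, $\mathrm{Col}(\mathfrak{F})=\mathrm{Grp}(\mathrm{Alg}(\mathfrak{F}))\rtimes\mathcal{O}$ means $\mathrm{Col}(\mathfrak{F})=\{AT:A\in\mathrm{Grp}(\mathrm{Alg}(\mathfrak{F})),T\in\mathcal{O}\}$ and $\mathrm{Grp}(\mathrm{Alg}(\mathfrak{F}))\cap\mathcal{O}=\{I\}$. *)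

From mathcomp Require Import all_boot all_order all_algebra.
From mathcomp Require Import all_classical all_reals all_analysis.
From mathcomp.real_closed Require Import complex.
Import Order.TTheory GRing.Theory Num.Theory numFieldNormedType.Exports.

Set Implicit Arguments.
Unset Strict Implicit.
Unset Printing Implicit Defensive.

Local Open Scope ring_scope.
Local Open Scope classical_set_scope.
Local Open Scope complex_scope.

Section Defs.
Variable R : realType.

(* An element of C_0[-1,1] is
   represented by its extension by 0 outside [-1,1] (this extension is
   unique, and the sup norm over [-1,1] equals the sup norm over R). *)
Definition cfun := R -> R[i].

Definition cont_on_I (f : cfun) : Prop :=
  forall x, x \in `[-1, 1] -> forall e : R, 0 < e ->
    exists2 d : R, 0 < d & forall y, y \in `[-1, 1] ->
      `|y - x| < d -> `|f y - f x| < e%:C.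

Definition C0 : set cfun :=
  [set f | cont_on_I f /\ f (-1) = 0 /\ f 1 = 0 /\
           (forall x, x \notin `[-1, 1] -> f x = 0)].

Definition supnorm_le (f : cfun) (c : R) : Prop := forall x, `|f x| <= c%:C.

Definition sup_cvg (u : nat -> cfun) (g : cfun) : Prop :=
  forall e : R, 0 < e -> exists N : nat, forall n, (N <= n)%N ->
    forall x, `|u n x - g x| < e%:C.

Definition closed_subspace (M : set cfun) : Prop :=
  [/\ M `<=` C0, M (fun=> 0),
      (forall (a : R[i]) f g, M f -> M g -> M (fun x => a * f x + g x)) &
      (forall (u : nat -> cfun) g, (forall n, M (u n)) -> C0 g ->
          sup_cvg u g -> M g)].

(* operators act on cfun; they are considered only on C0 *)
Definition op := cfun -> cfun.

Definition op_eq (S T : op) : Prop := forall f, C0 f -> S f = T f.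

Definition op_id : op := id.
Definition op_comp (S T : op) : op := fun f => S (T f).

Definition bounded_op (S : op) : Prop :=
  [/\ (forall f, C0 f -> C0 (S f)),
      (forall (a : R[i]) f g, C0 f -> C0 g ->
          S (fun x => a * f x + g x) = (fun x => a * S f x + S g x)) &
      exists M : R, forall f c, C0 f -> supnorm_le f c ->
          supnorm_le (S f) (M * c)].

Definition is_inverse (S S' : op) : Prop :=
  op_eq (op_comp S S') op_id /\ op_eq (op_comp S' S) op_id.

Definition invertible_op (S : op) : Prop :=
  bounded_op S /\ exists S', bounded_op S' /\ is_inverse S S'.

Definition op_image (S : op) (M : set cfun) : set cfun := S @` M.

Definition Alg (F : set (set cfun)) : set op :=
  [set S | bounded_op S /\ forall M, F M -> forall f, M f -> M (S f)].

Definition Grp (A : set op) : set op :=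
  [set S | A S /\ bounded_op S /\
           exists S', A S' /\ bounded_op S' /\ is_inverse S S'].

Definition Col (F : set (set cfun)) : set op :=
  [set S | invertible_op S /\
     forall M, closed_subspace M -> (F M <-> F (op_image S M))].

Definition supp (f : cfun) : set R := closure [set x | f x != 0].

Definition Nsub (th1 th2 : R -> R) (t : R) : set cfun :=
  [set f | C0 f /\ supp f `<=` `[th1 t, th2 t]].

Definition Nest (th1 th2 : R -> R) : set (set cfun) :=
  [set Nsub th1 th2 t | t in `[0, 1]].

Definition bij_on (A B : set R) (f : R -> R) : Prop :=
  [/\ {in A, forall x, f x \in B},
      {in A &, injective f} &
      forall y, y \in B -> exists2 x, x \in A & f x = y].

Definition incr_on (A : set R) (f : R -> R) : Prop :=
  {in A &, forall x y, x < y -> f x < f y}.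
Definition decr_on (A : set R) (f : R -> R) : Prop :=
  {in A &, forall x y, x < y -> f y < f x}.

Definition Gamma : set (R -> R) :=
  [set phi | bij_on `[-1, 1] `[-1, 1] phi /\ incr_on `[-1, 1] phi].

(* Gamma_{theta1,theta2}([-1,1]) : theta1^{-1} o phi o theta1 and
   theta2^{-1} o phi o theta2 are both defined on [0,1] and coincide:
   for every t in [0,1] there is s in [0,1] (the common value) with
   theta1 s = phi (theta1 t) and theta2 s = phi (theta2 t). *)
Definition Gamma_th (th1 th2 : R -> R) : set (R -> R) :=
  [set phi | Gamma phi /\
     forall t, t \in `[0, 1] ->
       exists2 s, s \in `[0, 1] &
         th1 s = phi (th1 t) /\ th2 s = phi (th2 t)].

Definition inv_on_I (phi psi : R -> R) : Prop :=
  {in `[-1, 1], forall x, psi (phi x) = x} /\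
  {in `[-1, 1], forall x, phi (psi x) = x}.

Definition Vop (phi : R -> R) : op :=
  fun f x => if x \in `[-1, 1] then f (phi x) else 0.

Definition Orb (th1 th2 : R -> R) : set op :=
  [set T | exists2 phi, Gamma_th th1 th2 phi & op_eq T (Vop phi)].

End Defs.

(* A composition operator V_phi maps the nest member N_t (the functions supported
   in [theta1 t, theta2 t]) onto the functions supported in
   [phi^-1 (theta1 t), phi^-1 (theta2 t)], and tent functions show that such a
   subspace determines the endpoints of a nondegenerate interval.  Hence V_phi
   permutes the nest exactly when phi carries theta1 t and theta2 t to
   theta1 s and theta2 s for one common s, which is the defining condition of
   Gamma_{theta1,theta2}.
   Conversely, a collineation S of the nest induces an increasing bijection tau
   of [0, 1] with S N_(tau t) = N_t.  Gluing theta_i o tau o theta_i^-1 on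
   [-1, 0] and on [0, 1] gives phi in Gamma_{theta1,theta2} such that V_phi
   induces the same tau, so S V_phi^-1 leaves every N_t invariant, i.e. lies in
   Grp(Alg N).  The decomposition is unique because an element of O(N) fixing
   every N_t fixes every theta_i t, and these points exhaust [-1, 1]. *)

From mathcomp Require Import all_boot all_order all_algebra.
From mathcomp Require Import all_classical all_reals all_analysis.
From mathcomp.real_closed Require Import complex.
From mathcomp.algebra_tactics Require Import ring lra.
Import Order.TTheory GRing.Theory Num.Theory numFieldNormedType.Exports.

Set Implicit Arguments.
Unset Strict Implicit.
Unset Printing Implicit Defensive.

Local Open Scope ring_scope.
Local Open Scope classical_set_scope.
Local Open Scope complex_scope.

Section ComplexNorm.
Variable R : realType.
Implicit Types (z w : R[i]) (e : R).

(* [R[i]] is only partially ordered; estimates are transported to [R], where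
   [lra] applies. *)
Definition cnorm z : R := complex.Re `|z|.

Lemma cnormE z : `|z| = (cnorm z)%:C.
Proof. by rewrite /cnorm normc_def. Qed.

Lemma cnorm_ge0 z : 0 <= cnorm z.
Proof. by rewrite -ler0c -cnormE. Qed.

Lemma cnormD z w : cnorm (z + w) <= cnorm z + cnorm w.
Proof. by rewrite -lecR rmorphD /= -!cnormE ler_normD. Qed.

Lemma cnormM z w : cnorm (z * w) = cnorm z * cnorm w.
Proof. by apply: (@complexI R); rewrite rmorphM /= -!cnormE normrM. Qed.

Lemma cnormN z : cnorm (- z) = cnorm z.
Proof. by rewrite /cnorm normrN. Qed.

Lemma cnorm_real (x : R) : cnorm x%:C = `|x|.
Proof. by rewrite /cnorm normc_def /= expr0n /= addr0 sqrtr_sqr. Qed.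

Lemma ltc_norm z e : (`|z| < e%:C) = (cnorm z < e).
Proof. by rewrite cnormE ltcR. Qed.

Lemma lec_norm z e : (`|z| <= e%:C) = (cnorm z <= e).
Proof. by rewrite cnormE lecR. Qed.

Lemma cnorm_small_eq0 z : (forall e, 0 < e -> cnorm z < e) -> z = 0.
Proof.
move=> small; apply/eqP; rewrite -normr_eq0 cnormE.
rewrite (_ : 0 = 0%:C) // (inj_eq (@complexI R)) eq_le cnorm_ge0 andbT.
by apply/ler_addgt0Pr => e e0; rewrite add0r ltW ?small.
Qed.

End ComplexNorm.

Section ContinuousFunctions.
Variable R : realType.
Implicit Types (f g : cfun R) (a : R[i]).

Lemma cont_on_I_lin a f g : cont_on_I f -> cont_on_I g ->
  cont_on_I (fun x => a * f x + g x).
Proof.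
move=> cf cg x xI e e0; set k := cnorm a.
have k0 : 0 <= k by exact: cnorm_ge0.
have e1 : 0 < e / 2 / (k + 1) by rewrite !divr_gt0 // ltr_pwDr.
have [d1 d10 near_f] := cf x xI _ e1.
have [d2 d20 near_g] := cg x xI (e / 2) ltac:(by rewrite divr_gt0).
exists (Num.min d1 d2) => [|y yI]; first by rewrite lt_min d10 d20.
rewrite lt_min => /andP[yd1 yd2].
move: (near_f y yI yd1) (near_g y yI yd2); rewrite !ltc_norm => hf hg.
have -> : a * f y + g y - (a * f x + g x) = a * (f y - f x) + (g y - g x) by ring.
apply: le_lt_trans (cnormD _ _) _; rewrite cnormM -/k.
have : k * cnorm (f y - f x) <= e / 2.
  apply: le_trans (_ : k * (e / 2 / (k + 1)) <= _); first by rewrite ler_wpM2l // ltW.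
  by rewrite mulrA ler_pdivrMr ?ltr_pwDr //; nra.
lra.
Qed.

Lemma C0_lin a f g : C0 f -> C0 g -> C0 (fun x => a * f x + g x).
Proof.
move=> [cf [f1 [f2 f3]]] [cg [g1 [g2 g3]]].
split; first exact: cont_on_I_lin.
rewrite f1 g1 f2 g2 mulr0 addr0; do 2!split=> //.
by move=> x xI; rewrite f3 // g3 // mulr0 addr0.
Qed.

Lemma C0_cst0 : C0 (fun=> 0 : R[i]).
Proof.
split=> // x _ e e0; exists 1 => // y _ _.
by rewrite subrr normr0 ltcR.
Qed.

Lemma C0_out f x : C0 f -> x \notin `[-1, 1] -> f x = 0.
Proof. by move=> [_ [_ [_]]]; apply. Qed.

End ContinuousFunctions.

Section MonotoneBijections.
Variable R : realType.
Implicit Types (A B C : set R) (f g : R -> R).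

Lemma bij_on_in A B f x : bij_on A B f -> x \in A -> f x \in B.
Proof. by case=> + _ _; apply. Qed.

Lemma bij_on_surj A B f y : bij_on A B f -> y \in B -> exists2 x, x \in A & f x = y.
Proof. by case=> _ _; apply. Qed.

Lemma bij_on_inj A B f : bij_on A B f -> {in A &, injective f}.
Proof. by case. Qed.

Lemma bij_on_comp A B C f g : bij_on A B f -> bij_on B C g -> bij_on A C (g \o f).
Proof.
move=> [fA f_inj f_surj] [gB g_inj g_surj]; split=> [x xA|x y xA yA /=|z zC].
- exact/gB/fA.
- by move/(g_inj _ _ (fA _ xA) (fA _ yA)); apply: f_inj.
- have [y yB <-] := g_surj z zC; have [x xA <-] := f_surj y yB.
  by exists x.
Qed.

Lemma bij_on_inverse A B f : bij_on A B f ->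
  exists g, [/\ bij_on B A g, {in A, cancel f g} & {in B, cancel g f}].
Proof.
move=> [fA f_inj f_surj].
have /choice[g gP] : forall y, exists x, y \in B -> x \in A /\ f x = y.
  move=> y; have [yB|_] := boolP (y \in B); last by exists y.
  by have [x xA fx] := f_surj y yB; exists x.
have fK : {in A, cancel f g}.
  by move=> x xA; apply: f_inj => //; [exact: (gP _ (fA x xA)).1 | rewrite (gP _ (fA x xA)).2].
exists g; split=> //; last by move=> y /gP[].
split=> [y /gP[]//|y1 y2 /gP[_ e1] /gP[_ e2] g12|x xA].
  by rewrite -e1 -e2 g12.
by exists (f x); [exact: fA | exact: fK].
Qed.

Lemma incr_on_lt A f x y : incr_on A f -> x \in A -> y \in A -> (f x < f y) = (x < y).
Proof.
move=> inc xA yA; apply/idP/idP => [fxy|]; last exact: inc.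
have [//|yx|exy] := ltgtP x y.
  by have := lt_trans fxy (inc _ _ yA xA yx); rewrite ltxx.
by move: fxy; rewrite exy ltxx.
Qed.

Lemma incr_on_le A f x y : incr_on A f -> x \in A -> y \in A -> (f x <= f y) = (x <= y).
Proof. by move=> inc xA yA; rewrite !leNgt (incr_on_lt inc). Qed.

Lemma decr_on_lt A f x y : decr_on A f -> x \in A -> y \in A -> (f x < f y) = (y < x).
Proof.
move=> dec xA yA; apply/idP/idP => [fxy|]; last exact: dec.
have [xy|//|exy] := ltgtP x y.
  by have := lt_trans fxy (dec _ _ xA yA xy); rewrite ltxx.
by move: fxy; rewrite exy ltxx.
Qed.

Lemma decr_on_le A f x y : decr_on A f -> x \in A -> y \in A -> (f x <= f y) = (y <= x).
Proof. by move=> dec xA yA; rewrite !leNgt (decr_on_lt dec). Qed.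

Lemma incr_on_inj A f : incr_on A f -> {in A &, injective f}.
Proof.
move=> inc x y xA yA fxy; apply/eqP.
by rewrite eq_le -(incr_on_le inc xA yA) -(incr_on_le inc yA xA) fxy lexx.
Qed.

Lemma incr_on_can A B f g : incr_on A f -> {in B, forall y, g y \in A} ->
  {in B, cancel g f} -> incr_on B g.
Proof.
by move=> inc gB gK x y xB yB; rewrite -(incr_on_lt inc (gB _ xB) (gB _ yB)) !gK.
Qed.

Lemma in_set_itvcc (a b x : R) : (x \in `[a, b]) = (a <= x <= b).
Proof. by rewrite mem_setE in_itv. Qed.

Lemma incr_bij_on_left (a b c d : R) f :
  bij_on `[a, b] `[c, d] f -> incr_on `[a, b] f -> a <= b -> f a = c.
Proof.
move=> fbij inc ab; have aI : a \in `[a, b] by rewrite in_set_itvcc lexx ab.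
have /andP[cfa fad] : c <= f a <= d by rewrite -in_set_itvcc (bij_on_in fbij).
have [|x xI fx] := bij_on_surj fbij (_ : c \in `[c, d]).
  by rewrite in_set_itvcc lexx (le_trans cfa).
apply/eqP; rewrite eq_le cfa andbT -fx (incr_on_le inc aI xI).
by move: xI; rewrite in_set_itvcc => /andP[].
Qed.

Lemma incr_bij_on_right (a b c d : R) f :
  bij_on `[a, b] `[c, d] f -> incr_on `[a, b] f -> a <= b -> f b = d.
Proof.
move=> fbij inc ab; have bI : b \in `[a, b] by rewrite in_set_itvcc lexx ab.
have /andP[cfb fbd] : c <= f b <= d by rewrite -in_set_itvcc (bij_on_in fbij).
have [|x xI fx] := bij_on_surj fbij (_ : d \in `[c, d]).
  by rewrite in_set_itvcc lexx (le_trans cfb).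
apply/eqP; rewrite eq_le fbd /= -fx (incr_on_le inc xI bI).
by move: xI; rewrite in_set_itvcc => /andP[].
Qed.

Lemma decr_bij_on_left (a b c d : R) f :
  bij_on `[a, b] `[c, d] f -> decr_on `[a, b] f -> a <= b -> f a = d.
Proof.
move=> fbij dec ab; have aI : a \in `[a, b] by rewrite in_set_itvcc lexx ab.
have /andP[cfa fad] : c <= f a <= d by rewrite -in_set_itvcc (bij_on_in fbij).
have [|x xI fx] := bij_on_surj fbij (_ : d \in `[c, d]).
  by rewrite in_set_itvcc lexx (le_trans cfa).
apply/eqP; rewrite eq_le fad /= -fx (decr_on_le dec xI aI).
by move: xI; rewrite in_set_itvcc => /andP[].
Qed.

End MonotoneBijections.

Section IncreasingBijections.
Variable R : realType.
Implicit Types (phi psi : R -> R) (x y : R).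

Lemma Gamma_in phi x : Gamma phi -> x \in `[-1, 1] -> phi x \in `[-1, 1].
Proof. by move=> [phib _]; apply: bij_on_in phib. Qed.

Lemma Gamma_lt phi x y : Gamma phi -> x \in `[-1, 1] -> y \in `[-1, 1] ->
  (phi x < phi y) = (x < y).
Proof. by move=> [_ inc]; apply: incr_on_lt inc. Qed.

Lemma Gamma_le phi x y : Gamma phi -> x \in `[-1, 1] -> y \in `[-1, 1] ->
  (phi x <= phi y) = (x <= y).
Proof. by move=> [_ inc]; apply: incr_on_le inc. Qed.

Lemma Gamma_surj phi y : Gamma phi -> y \in `[-1, 1] ->
  exists2 x, x \in `[-1, 1] & phi x = y.
Proof. by move=> [phib _]; apply: bij_on_surj phib. Qed.

Lemma GammaN1 phi : Gamma phi -> phi (-1) = -1.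
Proof. by case=> phib inc; apply: (incr_bij_on_left phib inc); lra. Qed.

Lemma Gamma1 phi : Gamma phi -> phi 1 = 1.
Proof. by case=> phib inc; apply: (incr_bij_on_right phib inc); lra. Qed.

Lemma Gamma_id : Gamma (@id R).
Proof. by split=> [|x y _ _ //]; split=> // y yI; exists y. Qed.

Lemma Gamma_comp phi psi : Gamma phi -> Gamma psi -> Gamma (phi \o psi).
Proof.
move=> [phib phii] [psib psii]; split; first exact: bij_on_comp psib phib.
by move=> x y xI yI xy /=; apply/phii/psii; rewrite ?(bij_on_in psib).
Qed.

Lemma Gamma_inverse phi : Gamma phi -> exists psi, Gamma psi /\ inv_on_I phi psi.
Proof.
move=> [phib inc]; have [psi [psib phiK psiK]] := bij_on_inverse phib.
exists psi; split=> //; split=> //.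
by apply: incr_on_can inc _ psiK => y /(bij_on_in psib).
Qed.

Lemma within_itv_continuous (a b x : R) (f : R -> R) :
  {within `[a, b], continuous f} -> x \in `[a, b] -> forall e : R, 0 < e ->
  exists2 d : R, 0 < d & forall y, y \in `[a, b] -> `|y - x| < d -> `|f y - f x| < e.
Proof.
move=> /subspace_continuousP cf xab e e0.
have /cvgrPdist_lt /(_ e e0) := cf x (set_mem xab).
rewrite near_withinE => /nbhs_ballP[d /= d0 hd]; exists d => // y yab yx.
by rewrite distrC; apply: hd (set_mem yab); rewrite /ball /= distrC.
Qed.

Lemma Gamma_continuous phi : Gamma phi -> {within `[-1, 1], continuous phi}.
Proof.
move=> G; apply: segment_inc_surj_continuous => [x y xI yI|y].
  by apply: Gamma_le; rewrite ?mem_setE.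
rewrite (GammaN1 G) (Gamma1 G) => yI.
by have [x xI <-] := Gamma_surj G (mem_set yI); exists x => //; apply: set_mem.
Qed.

Lemma Gamma_sign_fix0 phi : Gamma phi ->
  (forall x, x \in `[-1, 1] -> x < 0 -> phi x <= 0) ->
  (forall x, x \in `[-1, 1] -> 0 < x -> 0 <= phi x) -> phi 0 = 0.
Proof.
move=> G neg pos; have I0 : (0 : R) \in `[-1, 1] by rewrite in_set_itvcc; lra.
have := Gamma_in G I0; rewrite in_set_itvcc => /andP[phi0_1 phi0_2].
have [lt0|gt0|//] := ltgtP (phi 0) 0.
  have [|z zI phiz] := Gamma_surj G (_ : phi 0 / 2 \in `[-1, 1]).
    by rewrite in_set_itvcc; lra.
  have /(pos z zI) : 0 < z by rewrite -(Gamma_lt G) // phiz; lra.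
  by rewrite phiz; lra.
have [|z zI phiz] := Gamma_surj G (_ : phi 0 / 2 \in `[-1, 1]).
  by rewrite in_set_itvcc; lra.
have /(neg z zI) : z < 0 by rewrite -(Gamma_lt G) // phiz; lra.
by rewrite phiz; lra.
Qed.

Lemma Gamma_glue (h1 h2 : R -> R) :
  bij_on `[-1, 0] `[-1, 0] h1 -> incr_on `[-1, 0] h1 ->
  bij_on `[0, 1] `[0, 1] h2 -> incr_on `[0, 1] h2 ->
  Gamma (fun x => if x <= 0 then h1 x else h2 x).
Proof.
move=> h1b h1i h2b h2i; set phi := fun x => _.
have h10 : h1 0 = 0 by apply: (incr_bij_on_right h1b h1i); lra.
have h20 : h2 0 = 0 by apply: (incr_bij_on_left h2b h2i); lra.
have inJ x : x \in `[-1, 1] -> x <= 0 -> x \in `[-1, 0].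
  by rewrite !in_set_itvcc => /andP[-> _].
have inK x : x \in `[-1, 1] -> 0 <= x -> x \in `[0, 1].
  by rewrite !in_set_itvcc => /andP[_ ->] ->.
have h2_gt0 x : x \in `[0, 1] -> 0 < x -> 0 < h2 x.
  by move=> xK x0; rewrite -h20 (incr_on_lt h2i) // in_set_itvcc; lra.
have inc : incr_on `[-1, 1] phi.
  move=> x y xI yI xy; rewrite /phi; have [y0|y0] := leP y 0.
    have x0 := ltW (lt_le_trans xy y0); rewrite x0.
    by apply: h1i; rewrite ?inJ.
  have [x0|x0] := leP x 0; last by apply: h2i; rewrite ?inK ?ltW.
  have := bij_on_in h1b (inJ _ xI x0); rewrite in_set_itvcc => /andP[_ h1x].
  by apply: le_lt_trans h1x _; apply: h2_gt0; rewrite ?inK ?ltW.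
split=> //; split=> [x xI||y yI].
- rewrite /phi; have [x0|x0] := leP x 0.
    by have := bij_on_in h1b (inJ _ xI x0); rewrite !in_set_itvcc; lra.
  by have := bij_on_in h2b (inK _ xI (ltW x0)); rewrite !in_set_itvcc; lra.
- exact: incr_on_inj inc.
- have [y0|y0] := leP y 0.
    have [|x xJ h1x] := bij_on_surj h1b (_ : y \in `[-1, 0]); first exact: inJ.
    move: xJ; rewrite in_set_itvcc => /andP[x1 x0].
    by exists x; rewrite /phi ?x0 // in_set_itvcc x1 (le_trans x0).
  have [|x xK h2x] := bij_on_surj h2b (_ : y \in `[0, 1]); first by rewrite inK ?ltW.
  have x0 : 0 < x.
    rewrite lt_neqAle; move: xK; rewrite in_set_itvcc => /andP[-> _]; rewrite andbT.
    by apply: contraTneq y0 => x0; rewrite -h2x -x0 h20 ltxx.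
  by exists x; rewrite /phi ?leNgt ?x0 //; move: xK; rewrite !in_set_itvcc => /andP[_ ->]; rewrite andbT; lra.
Qed.

End IncreasingBijections.

Section SupportedSubspaces.
Variable R : realType.
Implicit Types (a b c d p r u v x : R) (f g : cfun R).

Definition C0on a b : set (cfun R) :=
  [set f | C0 f /\ forall x, f x != 0 -> a <= x <= b].

Lemma Nsub_C0on (th1 th2 : R -> R) t : Nsub th1 th2 t = C0on (th1 t) (th2 t).
Proof.
apply/funext => f; apply/propext; split=> -[Cf fsupp]; split=> //.
  by move=> x fx; have /fsupp : supp f x by apply: subset_closure.
rewrite [X in _ `<=` X](closure_id _).1; last exact: itv_closed.
by apply: closureS => x /= /fsupp; rewrite in_itv.
Qed.

Lemma C0on_closed a b : closed_subspace (C0on a b).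
Proof.
split=> [f []//|||u g uab Cg ug].
- by split=> [|x]; [exact: C0_cst0 | rewrite eqxx].
- move=> k f g [Cf fab] [Cg gab]; split=> [|x]; first exact: C0_lin.
  have [/eqP fx0|/fab//] := boolP (f x == 0).
  by have [/eqP gx0|/gab//] := boolP (g x == 0); rewrite fx0 gx0 mulr0 addr0 eqxx.
split=> // x gx; apply: contraNT gx => xab; apply/eqP/cnorm_small_eq0 => e e0.
have [N /(_ N (leqnn N) x)] := ug e e0.
have [_ uNab] := uab N.
have -> : u N x = 0 by apply/eqP; apply: contraNT xab => /uNab.
by rewrite sub0r ltc_norm cnormN.
Qed.

Definition bump p r : cfun R := fun x => (Num.max 0 (r - `|x - p|))%:C.

Lemma bump_eq0 p r x : r <= `|x - p| -> bump p r x = 0.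
Proof. by move=> rx; rewrite /bump max_l // subr_le0. Qed.

Lemma bump_neq0 p r x : bump p r x != 0 -> p - r < x < p + r.
Proof.
apply: contraNT; rewrite negb_and -!leNgt => xr; apply/eqP/bump_eq0.
by rewrite ler_normr; case/orP: xr => h; apply/orP; [right|left]; lra.
Qed.

Lemma bump_center p r : 0 < r -> bump p r p != 0.
Proof.
move=> r0; rewrite /bump subrr normr0 subr0 max_r ?ltW //.
by apply: contraTneq r0 => -[->]; rewrite ltxx.
Qed.

Lemma bump_C0 p r : -1 <= p - r -> p + r <= 1 -> C0 (bump p r).
Proof.
move=> pr1 pr2; split=> [x _ e e0|].
  exists e => // y _ yx; rewrite -rmorphB ltc_norm cnorm_real.
  apply: le_lt_trans yx; rewrite ler_norml !maxEle.
  have := ler_dist_dist (y - p) (x - p); rewrite opprB addrA subrK.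
  rewrite ler_norml => /andP[h1 h2].
  by case: (leP 0 (r - `|x - p|)); case: (leP 0 (r - `|y - p|)) => *; apply/andP; split; lra.
have out x : (x <= -1) || (1 <= x) -> bump p r x = 0.
  by case/orP=> x1; apply: bump_eq0; rewrite ler_normr; apply/orP; [right|left]; lra.
split; first by apply: out; rewrite lexx.
split; first by apply: out; rewrite lexx orbT.
move=> x; rewrite in_set_itvcc negb_and -!ltNge => /orP[] /ltW x1.
  by apply: out; rewrite x1.
by apply: out; rewrite x1 orbT.
Qed.

Lemma C0on_bump a b u v : -1 <= u -> u < v -> v <= 1 -> a <= u -> v <= b ->
  C0on a b (bump ((u + v) / 2) ((v - u) / 2)).
Proof.
move=> u1 uv v1 au vb; split; first by apply: bump_C0; lra.
by move=> x /bump_neq0 /andP[x1 x2]; apply/andP; split; lra.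
Qed.

Lemma C0on_subset_mid a b c d u v : -1 <= u -> u < v -> v <= 1 -> a <= u -> v <= b ->
  C0on a b `<=` C0on c d -> c <= (u + v) / 2 <= d.
Proof.
move=> u1 uv v1 au vb sub.
have [_ /(_ ((u + v) / 2))] := sub _ (C0on_bump u1 uv v1 au vb).
by apply; apply: bump_center; lra.
Qed.

Lemma C0on_subset a b c d : -1 <= a -> a < b -> b <= 1 ->
  C0on a b `<=` C0on c d -> c <= a /\ b <= d.
Proof.
(* A tent inside (a, min b c), resp. (max a d, b), cannot vanish at its centre. *)
move=> a1 ab b1 sub; split; rewrite leNgt; apply/negP => lt.
  have m1 : a < Num.min b c by rewrite lt_min ab lt.
  have m2 : Num.min b c <= b by rewrite ge_min lexx.
  have m3 : Num.min b c <= c by rewrite ge_min lexx orbT.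
  have /andP[+ _] := C0on_subset_mid a1 m1 (le_trans m2 b1) (lexx a) m2 sub.
  lra.
have m1 : Num.max a d < b by rewrite gt_max ab lt.
have m2 : a <= Num.max a d by rewrite le_max lexx.
have m3 : d <= Num.max a d by rewrite le_max lexx orbT.
have /andP[_] := C0on_subset_mid (le_trans a1 m2) m1 b1 m2 (lexx b) sub.
lra.
Qed.

Lemma C0on_inj a b c d : -1 <= a -> a < b -> b <= 1 -> -1 <= c -> d <= 1 ->
  C0on a b = C0on c d -> a = c /\ b = d.
Proof.
move=> a1 ab b1 c1 d1 E.
have [ca bd] : c <= a /\ b <= d by apply: C0on_subset; rewrite ?E.
have [ac db] : a <= c /\ d <= b by apply: C0on_subset; rewrite -?E //; lra.
by split; apply/eqP; rewrite eq_le ?ca ?ac ?bd ?db.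
Qed.

End SupportedSubspaces.

Section CompositionOperators.
Variable R : realType.
Implicit Types (phi psi : R -> R) (a b c d x : R) (f g : cfun R).

Lemma Vop_in phi f x : x \in `[-1, 1] -> Vop phi f x = f (phi x).
Proof. by rewrite /Vop => ->. Qed.

Lemma Vop_out phi f x : x \notin `[-1, 1] -> Vop phi f x = 0.
Proof. by rewrite /Vop => /negbTE ->. Qed.

Lemma Vop_C0 phi f : Gamma phi -> C0 f -> C0 (Vop phi f).
Proof.
move=> G [cf [f1 [f2 f0]]].
have N1I : (-1 : R) \in `[-1, 1] by rewrite in_set_itvcc lexx; lra.
have I1 : (1 : R) \in `[-1, 1] by rewrite in_set_itvcc lexx; lra.
split; last by rewrite !Vop_in // (GammaN1 G) (Gamma1 G); do 2!split=> //; exact: Vop_out.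
move=> x xI e e0; have [d1 d10 near_f] := cf _ (Gamma_in G xI) e e0.
have [d d0 near_phi] := within_itv_continuous (Gamma_continuous G) xI d10.
exists d => // y yI yx.
by rewrite !Vop_in //; apply: near_f; [exact: Gamma_in | exact: near_phi].
Qed.

Lemma Vop_lin phi (k : R[i]) f g :
  Vop phi (fun x => k * f x + g x) = (fun x => k * Vop phi f x + Vop phi g x).
Proof. by apply/funext => x; rewrite /Vop; case: ifP; rewrite ?mulr0 ?addr0. Qed.

Lemma Vop_bounded phi : Gamma phi -> bounded_op (Vop phi).
Proof.
move=> G; split=> [f|k f g _ _|]; [exact: Vop_C0 | exact: Vop_lin |].
exists 1 => f c _ fc x; rewrite mul1r.
have [xI|xI] := boolP (x \in `[-1, 1]); first by rewrite Vop_in.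
by rewrite Vop_out // normr0 (le_trans _ (fc 0)).
Qed.

Lemma Vop_comp phi psi f : Gamma phi -> Vop phi (Vop psi f) = Vop (psi \o phi) f.
Proof. by move=> G; apply/funext => x; rewrite /Vop; case: ifP => // xI; rewrite /= Gamma_in. Qed.

Lemma Vop_id_on phi f : C0 f -> {in `[-1, 1], forall x, phi x = x} -> Vop phi f = f.
Proof.
move=> Cf phi_id; apply/funext => x; rewrite /Vop.
by case: ifPn => xI; [rewrite phi_id | rewrite (C0_out Cf xI)].
Qed.

Lemma inv_on_I_sym phi psi : inv_on_I phi psi -> inv_on_I psi phi.
Proof. by case. Qed.

Lemma Vop_cancel phi psi f : Gamma phi -> inv_on_I phi psi -> C0 f ->
  Vop phi (Vop psi f) = f.
Proof. by move=> G [phiK _] Cf; rewrite Vop_comp //; apply: Vop_id_on. Qed.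

Lemma Vop_is_inverse phi psi : Gamma phi -> Gamma psi -> inv_on_I phi psi ->
  is_inverse (Vop phi) (Vop psi).
Proof.
move=> Gphi Gpsi inv; split=> f Cf; first exact: Vop_cancel.
by apply: Vop_cancel => //; exact: inv_on_I_sym.
Qed.

Lemma Vop_invertible phi : Gamma phi -> invertible_op (Vop phi).
Proof.
move=> G; split; first exact: Vop_bounded.
have [psi [Gpsi inv]] := Gamma_inverse G.
by exists (Vop psi); split; [exact: Vop_bounded | exact: Vop_is_inverse].
Qed.

Lemma Vop_C0on phi psi a b c d : Gamma phi -> Gamma psi -> inv_on_I phi psi ->
  c \in `[-1, 1] -> d \in `[-1, 1] -> phi c = a -> phi d = b ->
  Vop phi @` C0on a b = C0on c d.
Proof.
move=> Gphi Gpsi inv cI dI <- <-; have [_ psiK] := inv; apply/seteqP; split.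
  move=> _ [f [Cf fsupp] <-]; split=> [|x]; first exact: Vop_C0.
  have [xI|xI] := boolP (x \in `[-1, 1]); last by rewrite Vop_out ?eqxx.
  by rewrite Vop_in // => /fsupp; rewrite !Gamma_le.
move=> g [Cg gsupp]; exists (Vop psi g); last exact: Vop_cancel.
split=> [|y]; first exact: Vop_C0.
have [yI|yI] := boolP (y \in `[-1, 1]); last by rewrite Vop_out ?eqxx.
rewrite Vop_in // => /gsupp cpsid.
by rewrite -(psiK y yI) !Gamma_le ?Gamma_in.
Qed.

End CompositionOperators.

Section Operators.
Variable R : realType.
Implicit Types (S T A : op R) (f g : cfun R) (M X : set (cfun R))
  (F : set (set (cfun R))).

Lemma bounded_op0 S : bounded_op S -> S (fun=> 0) = (fun=> 0).
Proof.
move=> [_ lin _]; apply/funext => x.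
have := congr1 (fun h => h x) (lin 1 _ _ (@C0_cst0 R) (@C0_cst0 R)).
rewrite /= !mul1r addr0 => e.
by apply: (addrI (S (fun=> 0) x)); rewrite addr0 -e.
Qed.

Lemma image_op_eq S T M : op_eq S T -> M `<=` @C0 R -> S @` M = T @` M.
Proof.
move=> ST MC0; apply/seteqP; split=> _ [f Mf <-].
all: by exists f => //; rewrite ST //; apply: MC0.
Qed.

Lemma bounded_op_eq S T : op_eq S T -> bounded_op T -> bounded_op S.
Proof.
move=> ST [TC0 Tlin [m Tm]]; split=> [f Cf|k f g Cf Cg|].
- by rewrite ST //; exact: TC0.
- by rewrite (ST _ (C0_lin k Cf Cg)) Tlin // (ST _ Cf) (ST _ Cg).
- by exists m => f c Cf fc; rewrite ST //; exact: Tm.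
Qed.

Lemma is_inverse_op_eq S T T' : op_eq S T -> bounded_op T' -> is_inverse T T' ->
  is_inverse S T'.
Proof.
move=> ST [T'C0 _ _] [TT' T'T]; split=> f Cf; rewrite /op_comp.
  by rewrite (ST _ (T'C0 _ Cf)); exact: (TT' f Cf).
by rewrite (ST _ Cf); exact: (T'T f Cf).
Qed.

Lemma invertible_op_eq S T : op_eq S T -> invertible_op T -> invertible_op S.
Proof.
move=> ST [bT [T' [bT' TT']]]; split; first exact: bounded_op_eq bT.
by exists T'; split=> //; apply: is_inverse_op_eq TT'.
Qed.

Lemma Col_op_eq F S T : op_eq S T -> Col F T -> Col F S.
Proof.
move=> ST [iT colT]; split=> [|M cM]; first exact: invertible_op_eq iT.
by rewrite /op_image (image_op_eq ST); [exact: colT | case: cM].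
Qed.

Lemma bounded_op_comp S T : bounded_op S -> bounded_op T -> bounded_op (op_comp S T).
Proof.
move=> [SC0 Slin [ms Sm]] [TC0 Tlin [mt Tm]]; split=> [f Cf|k f g Cf Cg|].
- exact/SC0/TC0.
- by rewrite /op_comp Tlin // Slin //; exact: TC0.
- exists (ms * mt) => f c Cf fc; rewrite /op_comp -mulrA.
  by apply: Sm; [exact: TC0 | exact: Tm].
Qed.

Lemma is_inverse_comp A A' T T' : bounded_op A' -> bounded_op T ->
  is_inverse A A' -> is_inverse T T' -> is_inverse (op_comp A T) (op_comp T' A').
Proof.
move=> [A'C0 _ _] [TC0 _ _] [AA' A'A] [TT' T'T]; split=> f Cf; rewrite /op_comp.
  by have := TT' _ (A'C0 _ Cf); rewrite /op_comp => ->; exact: AA'.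
by have := A'A _ (TC0 _ Cf); rewrite /op_comp => ->; exact: T'T.
Qed.

Lemma image_op_comp S T M : op_comp S T @` M = S @` (T @` M).
Proof.
apply/seteqP; split=> [_ [f Mf <-]|_ [_ [f Mf <-] <-]]; last by exists f.
by exists (T f) => //; exists f.
Qed.

Lemma is_inverse_image S S' X : is_inverse S S' -> X `<=` @C0 R -> S' @` (S @` X) = X.
Proof.
move=> [_ S'S] XC0; rewrite -image_op_comp; apply/seteqP; split.
  by move=> _ [f Xf <-]; rewrite (S'S f (XC0 _ Xf)).
by move=> f Xf; exists f; rewrite // (S'S f (XC0 _ Xf)).
Qed.

Lemma bounded_op_sup_cvg S u g : bounded_op S -> (forall n, C0 (u n)) -> C0 g ->
  sup_cvg u g -> sup_cvg (fun n => S (u n)) (S g).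
Proof.
move=> [SC0 Slin [m Sm]] Cu Cg ug e e0.
have m1 : 0 < `|m| + 1 by rewrite ltr_pwDr.
have [N uN] := ug _ (divr_gt0 e0 m1); exists N => n nN x.
have Cd : C0 (fun y => (-1) * g y + u n y) by exact: C0_lin.
have dn : supnorm_le (fun y => (-1) * g y + u n y) (e / (`|m| + 1)).
  by move=> y; rewrite mulN1r addrC; apply/ltW/uN.
have := Sm _ _ Cd dn x; rewrite Slin //= mulN1r addrC lec_norm => Sdn.
rewrite ltc_norm; apply: le_lt_trans Sdn _.
rewrite mulrA ltr_pdivrMr // [e * _]mulrC ltr_pM2r //.
by have := ler_norm m; lra.
Qed.

Lemma closed_subspace_preimage S X : bounded_op S -> closed_subspace X ->
  closed_subspace [set g | C0 g /\ X (S g)].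
Proof.
move=> bS [XC0 X0 Xlin Xcl]; have [SC0 Slin _] := bS.
split=> [g []//|||u g uX Cg ug].
- by split; [exact: C0_cst0 | rewrite bounded_op0].
- move=> k f g [Cf Xf] [Cg Xg]; split; first exact: C0_lin.
  by rewrite Slin //; apply: Xlin.
- split=> //; apply: (Xcl (fun n => S (u n))); first by move=> n; case: (uX n).
    exact: SC0.
  by apply: bounded_op_sup_cvg => // n; case: (uX n).
Qed.

Lemma Col_preimage F S X : Col F S -> closed_subspace X -> F X ->
  exists2 M, F M & S @` M = X.
Proof.
move=> [[bS [S' [[S'C0 _ _] [SS' _]]]] colS] cX FX.
have [XC0 _ _ _] := cX.
pose M := [set g | C0 g /\ X (S g)].
have SM : S @` M = X.
  apply/seteqP; split=> [_ [g [_ Xg] <-]//|h Xh].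
  have SS'h : S (S' h) = h := SS' h (XC0 _ Xh).
  by exists (S' h); [split; [exact/S'C0/XC0 | rewrite SS'h] |].
exists M => //; apply/(colS _ (closed_subspace_preimage bS cX)).
by rewrite /op_image SM.
Qed.

End Operators.

Section Nest.
Variable R : realType.
Variables th1 th2 : R -> R.
Hypothesis th1_bij : bij_on `[0, 1] `[-1, 0] th1.
Hypothesis th1_decr : decr_on `[0, 1] th1.
Hypothesis th2_bij : bij_on `[0, 1] `[0, 1] th2.
Hypothesis th2_incr : incr_on `[0, 1] th2.
Implicit Types (phi psi : R -> R) (s t x : R) (M : set (cfun R)).

Local Notation N := (Nsub th1 th2).
Local Notation NN := (Nest th1 th2).

Lemma th1_range t : t \in `[0, 1] -> -1 <= th1 t <= 0.
Proof. by move=> tK; rewrite -in_set_itvcc (bij_on_in th1_bij). Qed.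

Lemma th2_range t : t \in `[0, 1] -> 0 <= th2 t <= 1.
Proof. by move=> tK; rewrite -in_set_itvcc (bij_on_in th2_bij). Qed.

Lemma th1_in t : t \in `[0, 1] -> th1 t \in `[-1, 1].
Proof. by move/th1_range; rewrite in_set_itvcc; lra. Qed.

Lemma th2_in t : t \in `[0, 1] -> th2 t \in `[-1, 1].
Proof. by move/th2_range; rewrite in_set_itvcc; lra. Qed.

Lemma th1_0 : th1 0 = 0.
Proof. by apply: (decr_bij_on_left th1_bij th1_decr); lra. Qed.

Lemma th2_0 : th2 0 = 0.
Proof. by apply: (incr_bij_on_left th2_bij th2_incr); lra. Qed.

Lemma itv01_0 : (0 : R) \in `[0, 1].
Proof. by rewrite in_set_itvcc lexx ler01. Qed.

Lemma th_lt t : t \in `[0, 1] -> 0 < t -> th1 t < th2 t.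
Proof.
move=> tK t0.
have : th1 t < th1 0 by rewrite (decr_on_lt th1_decr) ?itv01_0.
have : th2 0 < th2 t by rewrite (incr_on_lt th2_incr) ?itv01_0.
by rewrite th1_0 th2_0; lra.
Qed.

Lemma th1_cover x : x \in `[-1, 1] -> x < 0 ->
  exists t, [/\ t \in `[0, 1], 0 < t & th1 t = x].
Proof.
move=> xI x0; have [|t tK th1t] := bij_on_surj th1_bij (_ : x \in `[-1, 0]).
  by move: xI; rewrite !in_set_itvcc => /andP[-> _]; rewrite ltW.
exists t; split=> //; rewrite lt_neqAle; move: (tK); rewrite in_set_itvcc => /andP[-> _].
by rewrite andbT; apply: contraTneq x0 => t0; rewrite -th1t -t0 th1_0 ltxx.
Qed.

Lemma th2_cover x : x \in `[-1, 1] -> 0 < x ->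
  exists t, [/\ t \in `[0, 1], 0 < t & th2 t = x].
Proof.
move=> xI x0; have [|t tK th2t] := bij_on_surj th2_bij (_ : x \in `[0, 1]).
  by move: xI; rewrite !in_set_itvcc => /andP[_ ->]; rewrite ltW.
exists t; split=> //; rewrite lt_neqAle; move: (tK); rewrite in_set_itvcc => /andP[-> _].
by rewrite andbT; apply: contraTneq x0 => t0; rewrite -th2t -t0 th2_0 ltxx.
Qed.

Lemma Nsub_closed t : closed_subspace (N t).
Proof. by rewrite Nsub_C0on; exact: C0on_closed. Qed.

Lemma Nsub_C0 t : N t `<=` @C0 R.
Proof. by case: (Nsub_closed t). Qed.

Lemma Nsub_subset s t : s \in `[0, 1] -> t \in `[0, 1] -> (N s `<=` N t <-> s <= t).
Proof.
move=> sK tK; rewrite !Nsub_C0on; split=> [sub|st f [Cf fsupp]].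
  have [s0|s0] := leP s 0; first by move: tK; rewrite in_set_itvcc => /andP[/(le_trans s0)].
  have /andP[th1s _] := th1_range sK; have /andP[_ th2s] := th2_range sK.
  have [_] := C0on_subset th1s (th_lt sK s0) th2s sub.
  by rewrite (incr_on_le th2_incr).
split=> // x /fsupp /andP[h1 h2].
have : th1 t <= th1 s by rewrite (decr_on_le th1_decr).
have : th2 s <= th2 t by rewrite (incr_on_le th2_incr).
by move=> *; apply/andP; split; lra.
Qed.

Lemma Nsub_inj s t : s \in `[0, 1] -> t \in `[0, 1] -> N s = N t -> s = t.
Proof.
move=> sK tK Nst; apply/eqP; rewrite eq_le; apply/andP; split.
  by apply/(Nsub_subset sK tK); rewrite Nst.
by apply/(Nsub_subset tK sK); rewrite Nst.
Qed.

Lemma NestP M : NN M <-> exists2 t, t \in `[0, 1] & M = N t.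
Proof.
split=> [[t tK <-]|[t tK ->]]; exists t => //; first exact: mem_set.
exact: set_mem.
Qed.

Lemma Nest_Nsub t : t \in `[0, 1] -> NN (N t).
Proof. by move=> tK; apply/NestP; exists t. Qed.


Lemma Gamma_th_0 phi : Gamma_th th1 th2 phi -> phi 0 = 0.
Proof.
move=> [_ /(_ 0 itv01_0)[s sK []]]; rewrite th1_0 th2_0 => th1s th2s.
have /andP[_ ] := th1_range sK; have /andP[+ _] := th2_range sK.
by rewrite th1s th2s => ge0 le0; apply/eqP; rewrite eq_le ge0 le0.
Qed.

Lemma Gamma_th_id : Gamma_th th1 th2 id.
Proof. by split=> [|t tK]; [exact: Gamma_id | exists t]. Qed.

Lemma Gamma_th_comp phi psi : Gamma_th th1 th2 phi -> Gamma_th th1 th2 psi ->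
  Gamma_th th1 th2 (phi \o psi).
Proof.
move=> [Gphi phith] [Gpsi psith]; split=> [|t tK]; first exact: Gamma_comp.
have [s sK [th1s th2s]] := psith t tK; have [u uK [th1u th2u]] := phith s sK.
by exists u => //=; rewrite -th1s -th2s.
Qed.

Lemma Gamma_th_inv phi psi : Gamma_th th1 th2 phi -> Gamma psi ->
  inv_on_I phi psi -> Gamma_th th1 th2 psi.
Proof.
move=> Gth Gpsi [phiK psiK]; have [Gphi phith] := Gth; split=> // t tK.
have I0 : (0 : R) \in `[-1, 1] by rewrite in_set_itvcc; lra.
have psi0 : psi 0 = 0 by rewrite -{1}(Gamma_th_0 Gth) phiK.
have [|u uK th1u] := bij_on_surj th1_bij (_ : psi (th1 t) \in `[-1, 0]).
  have := Gamma_in Gpsi (th1_in tK); rewrite !in_set_itvcc => /andP[-> _].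
  by rewrite -psi0 Gamma_le ?th1_in //; have /andP[] := th1_range tK.
have [s sK [th1s th2s]] := phith u uK.
have st : s = t.
  by apply: (bij_on_inj th1_bij) => //; rewrite th1s th1u psiK ?th1_in.
by exists u => //; split=> //; rewrite -st th2s phiK ?th2_in.
Qed.

Lemma Vop_Nsub phi psi s t : Gamma phi -> Gamma psi -> inv_on_I phi psi ->
  s \in `[0, 1] -> phi (th1 s) = th1 t -> phi (th2 s) = th2 t -> Vop phi @` N t = N s.
Proof.
move=> Gphi Gpsi inv sK th1s th2s.
by rewrite !Nsub_C0on (Vop_C0on Gphi Gpsi inv (th1_in sK) (th2_in sK) th1s th2s).
Qed.

Lemma Vop_Nsub_endpoints phi s t : Gamma phi -> s \in `[0, 1] -> t \in `[0, 1] -> 0 < t ->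
  Vop phi @` N s = N t -> phi (th1 t) = th1 s /\ phi (th2 t) = th2 s.
Proof.
move=> Gphi sK tK t0; have [psi [Gpsi inv]] := Gamma_inverse Gphi; have [_ psiK] := inv.
have psi1 := Gamma_in Gpsi (th1_in sK); have psi2 := Gamma_in Gpsi (th2_in sK).
rewrite !Nsub_C0on (Vop_C0on Gphi Gpsi inv psi1 psi2) ?psiK ?th1_in ?th2_in //.
move: psi1 psi2; rewrite !in_set_itvcc => /andP[psi1 _] /andP[_ psi2].
have /andP[th1t _] := th1_range tK; have /andP[_ th2t] := th2_range tK.
move/esym/(C0on_inj th1t (th_lt tK t0) th2t psi1 psi2) => [-> ->].
by rewrite !psiK ?th1_in ?th2_in.
Qed.

Lemma Gamma_th_of_images phi : Gamma phi ->
  (forall t, t \in `[0, 1] -> 0 < t ->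
     exists2 s, s \in `[0, 1] & th1 s = phi (th1 t) /\ th2 s = phi (th2 t)) ->
  Gamma_th th1 th2 phi.
Proof.
move=> Gphi images; split=> // t tK.
have phi0 : phi 0 = 0.
  apply: Gamma_sign_fix0 => // x xI x0.
    have [u [uK u0 <-]] := th1_cover xI x0; have [s sK [<- _]] := images u uK u0.
    by have /andP[] := th1_range sK.
  have [u [uK u0 <-]] := th2_cover xI x0; have [s sK [_ <-]] := images u uK u0.
  by have /andP[] := th2_range sK.
have [t0|t0] := eqVneq t 0; first by exists 0; rewrite ?itv01_0 // t0 th1_0 th2_0 phi0.
by apply: images; rewrite // lt_neqAle eq_sym t0; move: tK; rewrite in_set_itvcc => /andP[].
Qed.

Lemma Vop_Nest phi M : Gamma_th th1 th2 phi -> M `<=` @C0 R ->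
  (NN M <-> NN (Vop phi @` M)).
Proof.
move=> Gth MC0; have Gphi := Gth.1; have [psi [Gpsi inv]] := Gamma_inverse Gphi.
have [phiK psiK] := inv; have [_ psith] := Gamma_th_inv Gth Gpsi inv.
split=> /NestP[t tK Mt]; apply/NestP.
  have [s sK [th1s th2s]] := psith t tK; exists s => //.
  have e1 : phi (th1 s) = th1 t by rewrite th1s psiK ?th1_in.
  have e2 : phi (th2 s) = th2 t by rewrite th2s psiK ?th2_in.
  by rewrite Mt (Vop_Nsub Gphi Gpsi inv sK e1 e2).
have [s sK [th1s th2s]] := Gth.2 t tK; exists s => //.
have e1 : psi (th1 s) = th1 t by rewrite th1s phiK ?th1_in.
have e2 : psi (th2 s) = th2 t by rewrite th2s phiK ?th2_in.
rewrite -(is_inverse_image (Vop_is_inverse Gphi Gpsi inv) MC0) Mt.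
by rewrite (Vop_Nsub Gpsi Gphi (inv_on_I_sym inv) sK e1 e2).
Qed.

Lemma Col_Vop phi : Gamma_th th1 th2 phi -> Col NN (Vop phi).
Proof.
move=> Gth; split=> [|M [MC0 _ _ _]]; first exact: Vop_invertible Gth.1.
exact: Vop_Nest.
Qed.

Lemma Gamma_th_of_Col_Vop phi : Gamma phi -> Col NN (Vop phi) -> Gamma_th th1 th2 phi.
Proof.
move=> Gphi colV; apply: Gamma_th_of_images => // t tK t0.
have [M /NestP[s sK ->] VNs] := Col_preimage colV (Nsub_closed t) (Nest_Nsub tK).
by exists s => //; have [-> ->] := Vop_Nsub_endpoints Gphi sK tK t0 VNs.
Qed.

Lemma Alg_of_images A : bounded_op A ->
  (forall t, t \in `[0, 1] -> A @` N t = N t) -> Alg NN A.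
Proof.
move=> bA AN; split=> // M /NestP[t tK ->] f Nf.
by rewrite -(AN t tK); exists f.
Qed.

Lemma Alg_Nsub_image A A' t : Alg NN A -> Alg NN A' -> is_inverse A A' ->
  t \in `[0, 1] -> A @` N t = N t.
Proof.
move=> [_ AN] [_ A'N] [AA' _] tK; apply/seteqP; split.
  by move=> _ [f Nf <-]; exact: AN (Nest_Nsub tK) _ Nf.
move=> h Nh; exists (A' h); first exact: A'N (Nest_Nsub tK) _ Nh.
exact: AA' h (Nsub_C0 Nh).
Qed.

Lemma Grp_Alg_Nest A M : Grp (Alg NN) A -> M `<=` @C0 R ->
  (NN M <-> NN (A @` M)).
Proof.
move=> [aA [_ [A' [aA' [_ [AA' A'A]]]]]] MC0.
split=> /NestP[t tK Mt]; apply/NestP; exists t => //.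
  by rewrite Mt (Alg_Nsub_image aA aA').
rewrite -(is_inverse_image (conj AA' A'A) MC0) Mt.
exact: Alg_Nsub_image aA' aA (conj A'A AA') tK.
Qed.

Lemma Col_of_decomp S A T : Grp (Alg NN) A -> Orb th1 th2 T ->
  op_eq S (op_comp A T) -> Col NN S.
Proof.
move=> GA [phi Gth ET] ES; have Gphi := Gth.1.
have [psi [Gpsi inv]] := Gamma_inverse Gphi.
have [aA [bA [A' [aA' [bA' AA']]]]] := GA.
apply: (Col_op_eq (T := op_comp A (Vop phi))) => [f Cf|].
  by rewrite ES // /op_comp ET.
split=> [|M [MC0 _ _ _]].
  split; first exact: bounded_op_comp bA (Vop_bounded Gphi).
  exists (op_comp (Vop psi) A'); split; first exact: bounded_op_comp (Vop_bounded Gpsi) bA'.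
  exact: is_inverse_comp bA' (Vop_bounded Gphi) AA' (Vop_is_inverse Gphi Gpsi inv).
rewrite /op_image image_op_comp (Vop_Nest Gth MC0).
by apply: Grp_Alg_Nest => // _ [f Mf <-]; apply: Vop_C0 (MC0 _ Mf).
Qed.

Lemma Grp_Alg_Orb_id T : Grp (Alg NN) T -> Orb th1 th2 T -> op_eq T (@op_id R).
Proof.
move=> [aT [_ [T' [aT' [_ TT']]]]] [phi Gth ET]; have Gphi := Gth.1.
have fix_th t : t \in `[0, 1] -> 0 < t -> phi (th1 t) = th1 t /\ phi (th2 t) = th2 t.
  move=> tK t0; apply: Vop_Nsub_endpoints => //.
  by rewrite -(image_op_eq ET (@Nsub_C0 t)) (Alg_Nsub_image aT aT').
have phi_id : {in `[-1, 1], forall x, phi x = x}.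
  move=> x xI; have [x0|x0|->] := ltgtP x 0; last exact: Gamma_th_0.
    by have [t [tK t0 <-]] := th1_cover xI x0; case: (fix_th t tK t0).
  by have [t [tK t0 <-]] := th2_cover xI x0; case: (fix_th t tK t0).
by move=> f Cf; rewrite ET // Vop_id_on.
Qed.

Lemma Orb_Col T : Orb th1 th2 T -> Col NN T.
Proof. by move=> [phi Gth ET]; apply: Col_op_eq ET (Col_Vop Gth). Qed.

Lemma Orb_id : Orb th1 th2 (@op_id R).
Proof. by exists id; [exact: Gamma_th_id | move=> f Cf; rewrite Vop_id_on]. Qed.

Lemma Orb_comp S T : Orb th1 th2 S -> Orb th1 th2 T -> Orb th1 th2 (op_comp S T).
Proof.
move=> [phi Gphi ES] [psi Gpsi ET]; exists (psi \o phi); first exact: Gamma_th_comp.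
by move=> f Cf; rewrite /op_comp ET // ES ?Vop_comp //; [exact: Gphi.1 | exact: Vop_C0 Gpsi.1 Cf].
Qed.

Lemma Orb_inv T : Orb th1 th2 T -> exists2 T', Orb th1 th2 T' & is_inverse T T'.
Proof.
move=> [phi Gth ET]; have [psi [Gpsi inv]] := Gamma_inverse Gth.1.
exists (Vop psi); first by exists psi; first exact: Gamma_th_inv Gth Gpsi inv.
exact: is_inverse_op_eq ET (Vop_bounded Gpsi) (Vop_is_inverse Gth.1 Gpsi inv).
Qed.

Lemma Col_reparam S : Col NN S -> exists tau,
  [/\ bij_on `[0, 1] `[0, 1] tau, incr_on `[0, 1] tau &
      forall t, t \in `[0, 1] -> S @` N (tau t) = N t].
Proof.
move=> colS; have [[_ [S' [_ SS']]] colSN] := colS.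
have /choice[tau tauP] :
    forall t, exists s, t \in `[0, 1] -> s \in `[0, 1] /\ S @` N s = N t.
  move=> t; have [tK|_] := boolP (t \in `[0, 1]); last by exists 0.
  have [_ /NestP[s sK ->] SNs] := Col_preimage colS (Nsub_closed t) (Nest_Nsub tK).
  by exists s.
have tauK t : t \in `[0, 1] -> tau t \in `[0, 1] by move/tauP => [].
have SN t : t \in `[0, 1] -> S @` N (tau t) = N t by move/tauP => [].
have S'N t : t \in `[0, 1] -> S' @` N t = N (tau t).
  by move=> tK; rewrite -(SN t tK) (is_inverse_image SS' (@Nsub_C0 _)).
have tau_inj : {in `[0, 1] &, injective tau}.
  by move=> s t sK tK st; apply: Nsub_inj => //; rewrite -(SN s sK) -(SN t tK) st.
have tau_le s t : s \in `[0, 1] -> t \in `[0, 1] -> s <= t -> tau s <= tau t.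
  move=> sK tK /(Nsub_subset sK tK) st; apply/(Nsub_subset (tauK s sK) (tauK t tK)).
  by rewrite -(S'N s sK) -(S'N t tK); apply: image_subset.
exists tau; split=> [|s t sK tK st|//].
  split=> // u uK.
  have /NestP[s sK SNu] := (colSN _ (Nsub_closed u)).1 (Nest_Nsub uK).
  exists s => //; apply: Nsub_inj; rewrite ?tauK //.
  by rewrite -(S'N s sK) -SNu /op_image (is_inverse_image SS' (@Nsub_C0 _)).
rewrite lt_neqAle tau_le ?ltW // andbT.
by apply: contraTneq st => /tau_inj -> //; rewrite ltxx.
Qed.

Lemma Gamma_th_of_reparam tau : bij_on `[0, 1] `[0, 1] tau -> incr_on `[0, 1] tau ->
  exists2 phi, Gamma_th th1 th2 phi &
    forall t, t \in `[0, 1] -> phi (th1 t) = th1 (tau t) /\ phi (th2 t) = th2 (tau t).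
Proof.
move=> taub tau_incr.
have [g1 [g1b th1K g1K]] := bij_on_inverse th1_bij.
have [g2 [g2b th2K g2K]] := bij_on_inverse th2_bij.
have h1b : bij_on `[-1, 0] `[-1, 0] (th1 \o tau \o g1).
  exact: bij_on_comp (bij_on_comp g1b taub) th1_bij.
have h2b : bij_on `[0, 1] `[0, 1] (th2 \o tau \o g2).
  exact: bij_on_comp (bij_on_comp g2b taub) th2_bij.
have h1i : incr_on `[-1, 0] (th1 \o tau \o g1).
  move=> x y xJ yJ xy; have [gx gy] := (bij_on_in g1b xJ, bij_on_in g1b yJ).
  rewrite /= (decr_on_lt th1_decr) ?(bij_on_in taub) // (incr_on_lt tau_incr) //.
  by rewrite -(decr_on_lt th1_decr) // !g1K.
have h2i : incr_on `[0, 1] (th2 \o tau \o g2).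
  move=> x y xK yK xy; have [gx gy] := (bij_on_in g2b xK, bij_on_in g2b yK).
  rewrite /= (incr_on_lt th2_incr) ?(bij_on_in taub) // (incr_on_lt tau_incr) //.
  by rewrite -(incr_on_lt th2_incr) // !g2K.
have tau0 : tau 0 = 0 by apply: (incr_bij_on_left taub tau_incr); lra.
have g10 : g1 0 = 0 by rewrite -{1}th1_0 th1K ?itv01_0.
pose phi x := if x <= 0 then (th1 \o tau \o g1) x else (th2 \o tau \o g2) x.
have phith t : t \in `[0, 1] -> phi (th1 t) = th1 (tau t) /\ phi (th2 t) = th2 (tau t).
  move=> tK; rewrite /phi; have /andP[_ ->] := th1_range tK; rewrite /= th1K //.
  split=> //; case: ifPn => //; rewrite /= ?th2K // => th2t0.
  have t0 : t = 0.
    apply: (bij_on_inj th2_bij) => //; rewrite ?itv01_0 // th2_0.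
    by apply/eqP; rewrite eq_le th2t0; have /andP[] := th2_range tK.
  by rewrite t0 th2_0 g10 tau0 th1_0 th2_0.
exists phi => //; split; first exact: Gamma_glue.
by move=> t tK; exists (tau t); [exact: bij_on_in taub tK | case: (phith t tK)].
Qed.

Lemma Col_decomp S : Col NN S ->
  exists A T, [/\ Grp (Alg NN) A, Orb th1 th2 T & op_eq S (op_comp A T)].
Proof.
move=> colS; have [[bS [S' [bS' SS']]] _] := colS.
have [tau [taub tau_incr SN]] := Col_reparam colS.
have [phi Gth phith] := Gamma_th_of_reparam taub tau_incr; have Gphi := Gth.1.
have [psi [Gpsi inv]] := Gamma_inverse Gphi; have [phiK psiK] := inv.
have tauK t : t \in `[0, 1] -> tau t \in `[0, 1] by apply: bij_on_in taub.
have S'N t : t \in `[0, 1] -> S' @` N t = N (tau t).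
  by move=> tK; rewrite -(SN t tK) (is_inverse_image SS' (@Nsub_C0 _)).
have VphiN t : t \in `[0, 1] -> Vop phi @` N (tau t) = N t.
  by move=> tK; have [? ?] := phith t tK; apply: Vop_Nsub Gphi Gpsi inv tK _ _.
have VpsiN t : t \in `[0, 1] -> Vop psi @` N t = N (tau t).
  by move=> tK; rewrite -(VphiN t tK) (is_inverse_image (Vop_is_inverse Gphi Gpsi inv) (@Nsub_C0 _)).
have bA := bounded_op_comp bS (Vop_bounded Gpsi).
have bA' := bounded_op_comp (Vop_bounded Gphi) bS'.
exists (op_comp S (Vop psi)), (Vop phi); split; last 2 first.
- by exists phi.
- by move=> f Cf; rewrite /op_comp Vop_cancel //; exact: inv_on_I_sym.
split; first by apply: Alg_of_images => // t tK; rewrite image_op_comp VpsiN ?SN.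
split=> //; exists (op_comp (Vop phi) S'); split.
  by apply: Alg_of_images => // t tK; rewrite image_op_comp S'N ?VphiN.
split=> //; apply: is_inverse_comp bS' (Vop_bounded Gpsi) SS' _.
exact: Vop_is_inverse Gpsi Gphi (inv_on_I_sym inv).
Qed.

End Nest.

Unset Implicit Arguments.
Local Close Scope complex_scope.

Theorem theorem5p6 (R : realType) (th1 th2 : R -> R) :
  bij_on `[0, 1] `[-1, 0] th1 -> decr_on `[0, 1] th1 ->
  bij_on `[0, 1] `[0, 1] th2 -> incr_on `[0, 1] th2 ->
  (* (i) Gamma_{theta1,theta2}([-1,1]) is a subgroup of Gamma([-1,1]) *)
  [/\ Gamma_th th1 th2 `<=` @Gamma R,
      Gamma_th th1 th2 id,
      (forall phi psi, Gamma_th th1 th2 phi -> Gamma_th th1 th2 psi ->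
         Gamma_th th1 th2 (phi \o psi)) &
      (forall phi psi, Gamma_th th1 th2 phi -> @Gamma R psi ->
         inv_on_I phi psi -> Gamma_th th1 th2 psi)]
  /\
  (* (ii) V_phi is a collineation iff phi in Gamma_{theta1,theta2};
     O(N) is a subgroup of Col(N) *)
  ((forall phi, @Gamma R phi ->
      (Col (Nest th1 th2) (Vop phi) <-> Gamma_th th1 th2 phi)) /\
   [/\ Orb th1 th2 `<=` Col (Nest th1 th2),
       Orb th1 th2 (@op_id R),
       (forall S T, Orb th1 th2 S -> Orb th1 th2 T -> Orb th1 th2 (op_comp S T)) &
       (forall T, Orb th1 th2 T -> exists2 T', Orb th1 th2 T' & is_inverse T T')])
  /\
  (* (iii) Col(N) = Grp(Alg(N)) x| O(N) *)
  ((forall S, Col (Nest th1 th2) S <->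
      exists A T, [/\ Grp (Alg (Nest th1 th2)) A, Orb th1 th2 T &
                      op_eq S (op_comp A T)]) /\
   (forall T, Grp (Alg (Nest th1 th2)) T -> Orb th1 th2 T -> op_eq T (@op_id R))).

Proof.
move=> th1b th1d th2b th2i; split; last split.
- split=> [phi []//||phi psi|phi psi].
  + exact: Gamma_th_id.
  + exact: Gamma_th_comp.
  + exact: Gamma_th_inv.
- split=> [phi Gphi|]; first by split; [exact: Gamma_th_of_Col_Vop | exact: Col_Vop].
  split=> [T|||T]; [exact: Orb_Col | exact: Orb_id | exact: Orb_comp | exact: Orb_inv].
- split=> [S|T]; last exact: Grp_Alg_Orb_id.
  split=> [|[A [T [GA OT ST]]]]; first exact: Col_decomp.
  exact: Col_of_decomp GA OT ST.
Qed.
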